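(* Let $w$ be a nonempty factor of slope $\alpha$ with minimum abelian period $m$. Let $k$ be the largest integer such that $q_k\le m$, and let $t$ be the largest integer such that $tq_k\le m$ and $1\le t\le a_{k+1}$. If $m\notin\mathcal{M}_\alpha$, then $$(q_{k+1}+2t-1)q_k-q_{k+1}\le |w| \quad\text{and}\quad (q_{k+1}+2t-1)q_k-q_{k+1}\le (\mathrm{ab}_\alpha(m)+2)m-2.$$
   Context: $\alpha\in(0,1)$ is irrational with $\alpha=[0;a_1,a_2,\ldots]$, $a_i$ positive integers, and $a_1\ge2$. $q_{-1}=0$, $q_0=1$, $q_1=a_1$, $q_k=a_kq_{k-1}+q_{k-2}$ ($k\ge2$). $\mathcal{M}_\alpha=\{tq_k: k\ge0,\ 1\le t\le a_{k+1}\}$. $\|x\|$ is the distance from $x$ to the nearest integer. Sturmian words: identify the circle $\mathbb{T}$ with $[0,1)$, $R(\rho)=\{\rho+\alpha\}$, with either $I_0=[0,1-\alpha)$, $I_1=[1-\alpha,1)$ or $I_0=(0,1-\alpha]$, $I_1=(1-\alpha,1]$; $\mathbf{s}_{\rho,\alpha}$ has $n$-th letter $0$ if $R^n(\rho)\in I_0$ and $1$ otherwise; all such words share the set $\mathcal{L}_\alpha$ of finite factors (factors of slope $\alpha$). Parikh vector of a binary word $u$: $(|u|_0,|u|_1)$; $P$ is contained in $Q$ if $P\le Q$ componentwise and $P\neq Q$. An abelian decomposition of $w$ is $w=u_0u_1\cdots u_{n-1}u_n$, $n\ge2$, with $u_1,\ldots,u_{n-1}$ of common Parikh vector $P$ and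 the Parikh vectors of $u_0,u_n$ contained in $P$; the common length of $u_1,\ldots,u_{n-1}$ is an abelian period of $w$, and the minimum abelian period is the least one. An abelian power of period $m$ and exponent $e$ is a concatenation of $e$ pairwise abelian equivalent words of length $m$; $\mathrm{ab}_\alpha(m)$ is the maximum exponent of an abelian power of period $m$ in $\mathcal{L}_\alpha$ (it is known that $\mathrm{ab}_\alpha(m)=\lfloor 1/\|m\alpha\|\rfloor$). *)

(* concrete reals R, words as lists of bool (false = letter 0, true = letter 1). *)
From Stdlib Require Import Reals ZArith List.
Open Scope R_scope.

Definition irrational (x : R) : Prop :=
  forall (p : Z) (q : nat), (0 < q)%nat -> x <> IZR p / INR q.

(** Gauss map x |-> {1/x}; continued fraction digits a_k = floor(1 / G^{k-1}(alpha)), k >= 1. *)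
Definition gauss (x : R) : R := frac_part (/ x).

Definition cf_digit (alpha : R) (k : nat) : nat :=
  match k with
  | O => O
  | S j => Z.to_nat (Int_part (/ (Nat.iter j gauss alpha)))
  end.

(** qpair n = (q_{n-1}, q_n), with q_{-1} = 0, q_0 = 1, q_k = a_k q_{k-1} + q_{k-2}. *)
Fixpoint qpair (alpha : R) (n : nat) : nat * nat :=
  match n with
  | O => (0%nat, 1%nat)
  | S j => let (p, c) := qpair alpha j in (c, (cf_digit alpha (S j) * c + p)%nat)
  end.

Definition cf_q (alpha : R) (n : nat) : nat := snd (qpair alpha n).

Definition in_M (alpha : R) (m : nat) : Prop :=
  exists k t : nat, (1 <= t)%nat /\ (t <= cf_digit alpha (S k))%nat /\ m = (t * cf_q alpha k)%nat.

(** Convention c = false : I_0 = [0, 1-alpha), I_1 = [1-alpha, 1).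
    Convention c = true  : I_0 = (0, 1-alpha], I_1 = (1-alpha, 1] (the point 0 = 1 lies in I_1). *)
Definition sletter (c : bool) (alpha x : R) : bool :=
  if c then
    (if Rlt_dec 0 (frac_part x) then
       (if Rle_dec (frac_part x) (1 - alpha) then false else true)
     else true)
  else
    (if Rlt_dec (frac_part x) (1 - alpha) then false else true).

Definition sturmian (c : bool) (alpha rho : R) (n : nat) : bool :=
  sletter c alpha (rho + INR n * alpha).

Definition factor_of_slope (alpha : R) (w : list bool) : Prop :=
  exists (rho : R) (c : bool) (n : nat), 0 <= rho < 1 /\
    forall i : nat, (i < length w)%nat -> nth i w false = sturmian c alpha rho (n + i).

Definition count_letter (b : bool) (u : list bool) : nat :=
  length (filter (fun x => Bool.eqb x b) u).

Definition parikh (u : list bool) : nat * nat := (count_letter false u, count_letter true u).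

Definition parikh_contained (P Q : nat * nat) : Prop :=
  (fst P <= fst Q)%nat /\ (snd P <= snd Q)%nat /\ P <> Q.

Definition abelian_period (w : list bool) (m : nat) : Prop :=
  exists (u0 un : list bool) (mids : list (list bool)) (P : nat * nat),
    w = u0 ++ concat mids ++ un /\ mids <> nil /\
    (forall u, In u mids -> parikh u = P /\ length u = m) /\
    parikh_contained (parikh u0) P /\ parikh_contained (parikh un) P.

Definition min_abelian_period (w : list bool) (m : nat) : Prop :=
  abelian_period w m /\ forall m', abelian_period w m' -> (m <= m')%nat.

Definition abelian_power (v : list bool) (m e : nat) : Prop :=
  exists blocks : list (list bool),
    v = concat blocks /\ length blocks = e /\
    (forall u, In u blocks -> length u = m) /\
    (forall u u', In u blocks -> In u' blocks -> parikh u = parikh u').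

Definition is_ab (alpha : R) (m E : nat) : Prop :=
  (exists v, factor_of_slope alpha v /\ abelian_power v m E) /\
  (forall v e, factor_of_slope alpha v -> abelian_power v m e -> (e <= E)%nat).

(* Write [w] as a window of the coding of the rotation [j |-> beta + j alpha] and put
   [theta = q_k alpha - p_k].  A window of length [p = t q_k] starting at [j] contains
   [t p_k + floor(y_j + t theta)] ones, where [y_j] is the fractional part of
   [beta + j alpha].  Hence it has the common Parikh vector unless [y_j + t theta] leaves
   [[0, 1)]; even then it is off by one letter and starts and ends with that letter, so its
   proper prefixes and suffixes still have contained Parikh vectors.  Each bad start [j] yields
   a start [j + s q_k], [s < t], where [y + theta] leaves [[0, 1)], and by the best
   approximation property of [q_k] those starts are [q_(k+1)] apart.  If
   [|w| < (q_(k+1) + 2t - 1) q_k - q_(k+1)], counting shows that fewer than [p] starts are bad,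
   so some residue class modulo [p] avoids them all and [w] has the abelian period
   [t q_k < m], contradicting minimality.  The second bound follows from
   [|w| <= (e + 2) m - 2], where [e <= ab_alpha(m)] is the exponent of the abelian power in the
   middle of an abelian decomposition of period [m]. *)

From Stdlib Require Import Reals ZArith List.
From Stdlib Require Import Bool Lia Lra Psatz Classical.

Open Scope nat_scope.

(** * Windows and abelian decompositions *)

Lemma count_letter_app b u v :
  count_letter b (u ++ v) = count_letter b u + count_letter b v.
Proof. unfold count_letter. now rewrite filter_app, length_app. Qed.

Lemma count_letter_false_true u :
  count_letter false u + count_letter true u = length u.
Proof. induction u as [|[] u IH]; unfold count_letter in *; simpl; lia. Qed.

Definition window (x : nat -> bool) (j L : nat) : list bool := map x (seq j L).

Definition ones (x : nat -> bool) (j L : nat) : nat := count_letter true (window x j L).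

Lemma length_window x j L : length (window x j L) = L.
Proof. unfold window. now rewrite length_map, length_seq. Qed.

Lemma window_add x j a b : window x j (a + b) = window x j a ++ window x (j + a) b.
Proof. unfold window. now rewrite seq_app, map_app. Qed.

Lemma nth_window x j L i : i < L -> nth i (window x j L) false = x (j + i).
Proof.
  intros Hi. unfold window.
  rewrite nth_indep with (d' := x 0) by now rewrite length_map, length_seq.
  now rewrite map_nth, seq_nth.
Qed.

Lemma concat_windows x j p e :
  concat (map (fun i => window x (j + i * p) p) (seq 0 e)) = window x j (e * p).
Proof.
  revert j. induction e as [|e IH]; intros j; [reflexivity|].
  cbn [seq map concat]. rewrite <- seq_shift, map_map.
  replace (S e * p) with (p + e * p) by lia.
  rewrite window_add, <- (IH (j + p)). f_equal; [f_equal; lia|].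
  f_equal. apply map_ext. intros i. f_equal. lia.
Qed.

Lemma ones_add x j a b : ones x j (a + b) = ones x j a + ones x (j + a) b.
Proof. unfold ones. now rewrite window_add, count_letter_app. Qed.

Lemma ones_le x j L : ones x j L <= L.
Proof.
  pose proof (count_letter_false_true (window x j L)).
  rewrite length_window in H. unfold ones. lia.
Qed.

Lemma ones_1 x j : ones x j 1 = Nat.b2n (x j).
Proof. unfold ones, window, count_letter. simpl. now destruct (x j). Qed.

Lemma ones_S x j L : ones x j (S L) = Nat.b2n (x j) + ones x (S j) L.
Proof. change (S L) with (1 + L). now rewrite ones_add, ones_1, Nat.add_1_r. Qed.

Lemma parikh_window x j L : parikh (window x j L) = (L - ones x j L, ones x j L).
Proof.
  unfold parikh, ones. f_equal.
  pose proof (count_letter_false_true (window x j L)). rewrite length_window in H. lia.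
Qed.

(* A window whose count of ones is off by one starts and ends with the surplus letter; this
   keeps the Parikh vectors of its proper prefixes and suffixes contained in [(p - c, c)]. *)
Section BalancedWindows.
Variables (x : nat -> bool) (p c : nat).

Definition balanced_window (j : nat) : Prop :=
  ones x j p = c \/
  (ones x j p = S c /\ x j = true /\ x (j + p - 1) = true) \/
  (S (ones x j p) = c /\ x j = false /\ x (j + p - 1) = false).

Lemma parikh_contained_window j s :
  s < p -> ones x j s <= c -> s - ones x j s <= p - c ->
  parikh_contained (parikh (window x j s)) (p - c, c).
Proof.
  intros Hs H1 H0. pose proof (ones_le x j s).
  rewrite parikh_window. repeat split; simpl; try lia.
  intros E. injection E. lia.
Qed.

Lemma suffix_contained j r :
  r < p -> balanced_window j -> parikh_contained (parikh (window x (j + (p - r)) r)) (p - c, c).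
Proof.
  intros Hr Hj.
  assert (Hsplit : ones x j p = Nat.b2n (x j) + ones x (S j) (p - r - 1) + ones x (j + (p - r)) r).
  { replace p with (S (p - r - 1) + r) at 1 by lia. rewrite ones_add, ones_S.
    replace (j + S (p - r - 1)) with (j + (p - r)) by lia. reflexivity. }
  pose proof (ones_le x (S j) (p - r - 1)). pose proof (ones_le x (j + (p - r)) r).
  assert (Nat.b2n (x j) <= 1) by (destruct (x j); simpl; lia).
  apply parikh_contained_window; [exact Hr| |];
    destruct Hj as [Hj|[[Hj [Hx _]]|[Hj [Hx _]]]]; rewrite ?Hx in Hsplit; simpl in Hsplit; lia.
Qed.

Lemma prefix_contained j s :
  s < p -> balanced_window j -> parikh_contained (parikh (window x j s)) (p - c, c).
Proof.
  intros Hs Hj.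
  assert (Hsplit : ones x j p = ones x j s + ones x (j + s) (p - s - 1) + Nat.b2n (x (j + p - 1))).
  { replace p with (s + (p - s - 1) + 1) at 1 by lia. rewrite !ones_add, ones_1.
    replace (j + (s + (p - s - 1))) with (j + p - 1) by lia. lia. }
  pose proof (ones_le x j s). pose proof (ones_le x (j + s) (p - s - 1)).
  assert (Nat.b2n (x (j + p - 1)) <= 1) by (destruct (x (j + p - 1)); simpl; lia).
  apply parikh_contained_window; [exact Hs| |];
    destruct Hj as [Hj|[[Hj [_ Hx]]|[Hj [_ Hx]]]]; rewrite ?Hx in Hsplit; simpl in Hsplit; lia.
Qed.

Lemma abelian_period_window n r :
  0 < p -> r < p -> r + p <= n ->
  (forall i, r + i * p + p <= n -> ones x (p + r + i * p) p = c) ->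
  balanced_window r -> balanced_window (p + r + (n - r) / p * p) ->
  abelian_period (window x p n) p.
Proof.
  intros Hp Hr Hrn Hfull Hfirst Hlast.
  set (e := (n - r) / p) in Hlast.
  pose proof (Nat.div_mod_eq (n - r) p) as Hn.
  pose proof (Nat.mod_upper_bound (n - r) p ltac:(lia)) as Hs.
  set (s := (n - r) mod p) in Hn, Hs. fold e in Hn.
  assert (He : 1 <= e) by nia.
  exists (window x p r), (window x (p + r + e * p) s),
    (map (fun i => window x (p + r + i * p) p) (seq 0 e)), (p - c, c).
  split; [|split; [|split; [|split]]].
  - rewrite concat_windows, <- !window_add. f_equal. lia.
  - destruct e; [lia|discriminate].
  - intros u Hu. apply in_map_iff in Hu as [i [<- Hi]]. apply in_seq in Hi.
    rewrite parikh_window, length_window, Hfull; [easy|nia].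
  - replace p with (r + (p - r)) at 1 by lia. now apply suffix_contained.
  - now apply prefix_contained.
Qed.

End BalancedWindows.

Lemma length_lt_of_parikh_contained u P :
  parikh_contained (parikh u) P -> length u < fst P + snd P.
Proof.
  intros [H0 [H1 Hne]]. pose proof (count_letter_false_true u). unfold parikh in *. simpl in *.
  destruct P as [a b]. simpl in *.
  destruct (Nat.eq_dec (count_letter false u) a); [|lia].
  destruct (Nat.eq_dec (count_letter true u) b); [|lia].
  subst. contradiction.
Qed.

Lemma length_concat_uniform (l : list (list bool)) m :
  (forall b, In b l -> length b = m) -> length (concat l) = length l * m.
Proof.
  induction l as [|b l IH]; intros Hl; [reflexivity|].
  simpl. rewrite length_app, IH, (Hl b (or_introl eq_refl)) by (intros; apply Hl; now right).
  lia.
Qed.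

Lemma abelian_period_decompose w m : abelian_period w m ->
  exists u v z e, w = u ++ v ++ z /\ abelian_power v m e /\ length v = e * m /\
    1 <= e /\ length u < m /\ length z < m.
Proof.
  intros [u [z [mids [P [-> [Hne [Hmids [Hu Hz]]]]]]]].
  destruct mids as [|v0 mids']; [contradiction|].
  assert (HP : fst P + snd P = m).
  { destruct (Hmids v0 (or_introl eq_refl)) as [Hpar Hlen].
    pose proof (count_letter_false_true v0). rewrite <- Hpar. unfold parikh. simpl. lia. }
  assert (Hlen : length (concat (v0 :: mids')) = length (v0 :: mids') * m)
    by (apply length_concat_uniform; intros b Hb; apply Hmids, Hb).
  exists u, (concat (v0 :: mids')), z, (length (v0 :: mids')).
  repeat split; [|exact Hlen|simpl; lia|rewrite <- HP; now apply length_lt_of_parikh_contained..].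
  exists (v0 :: mids'). repeat split.
  - intros b Hb. apply Hmids, Hb.
  - intros b b' Hb Hb'. now rewrite (proj1 (Hmids b Hb)), (proj1 (Hmids b' Hb')).
Qed.

Lemma abelian_period_le_length w m : abelian_period w m -> m <= length w.
Proof.
  intros Hm. destruct (abelian_period_decompose w m Hm) as [u [v [z [e [-> [_ [Hv [He _]]]]]]]].
  rewrite !length_app, Hv. nia.
Qed.

Lemma factor_of_slope_app_inv alpha u v z :
  factor_of_slope alpha (u ++ v ++ z) -> factor_of_slope alpha v.
Proof.
  intros [rho [c [n [Hrho Hw]]]]. exists rho, c, (n + length u). split; [exact Hrho|].
  intros i Hi. specialize (Hw (length u + i)).
  rewrite app_nth2_plus, app_nth1, !length_app in Hw by exact Hi.
  rewrite Hw by lia. f_equal. lia.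
Qed.

Lemma length_le_of_ab alpha w m E : factor_of_slope alpha w -> abelian_period w m ->
  is_ab alpha m E -> length w + 2 <= (E + 2) * m.
Proof.
  intros Hw Hm [_ Hmax].
  destruct (abelian_period_decompose w m Hm) as [u [v [z [e [-> [Hpow [Hv [_ [Hu Hz]]]]]]]]].
  pose proof (Hmax v e (factor_of_slope_app_inv _ _ _ _ Hw) Hpow).
  rewrite !length_app, Hv. nia.
Qed.

(** * Counting marked positions *)

Lemma list_sum_map_add (f g : nat -> nat) l :
  list_sum (map (fun s => f s + g s) l) = list_sum (map f l) + list_sum (map g l).
Proof. induction l; simpl; lia. Qed.

Lemma in_le_list_sum (f : nat -> nat) l s : In s l -> f s <= list_sum (map f l).
Proof. induction l as [|a l IH]; simpl; [easy|]. intros [->|H]; [lia|specialize (IH H); lia]. Qed.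

Lemma list_sum_map_le (f : nat -> nat) c l :
  (forall s, In s l -> f s <= c) -> list_sum (map f l) <= length l * c.
Proof.
  induction l as [|a l IH]; simpl; intros Hle; [lia|].
  pose proof (Hle a (or_introl eq_refl)). specialize (IH (fun s Hs => Hle s (or_intror Hs))). lia.
Qed.

Lemma list_sum_map_lt (f : nat -> nat) c l s0 :
  (forall s, In s l -> f s <= c) -> In s0 l -> f s0 < c -> list_sum (map f l) < length l * c.
Proof.
  induction l as [|a l IH]; simpl; [easy|]. intros Hle [->|Hs0] Hlt.
  - pose proof (list_sum_map_le f c l (fun s Hs => Hle s (or_intror Hs))). lia.
  - pose proof (Hle a (or_introl eq_refl)).
    specialize (IH (fun s Hs => Hle s (or_intror Hs)) Hs0 Hlt). lia.
Qed.

Definition count_in (P : nat -> bool) (u W : nat) : nat := length (filter P (seq u W)).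

Lemma count_in_add P u a b : count_in P u (a + b) = count_in P u a + count_in P (u + a) b.
Proof. unfold count_in. now rewrite seq_app, filter_app, length_app. Qed.

Lemma count_in_1 P u : count_in P u 1 = Nat.b2n (P u).
Proof. unfold count_in. simpl. now destruct (P u). Qed.

Lemma count_in_S P u W : count_in P u (S W) = count_in P u W + Nat.b2n (P (u + W)).
Proof. now rewrite <- Nat.add_1_r, count_in_add, count_in_1. Qed.

Lemma count_in_zero P u W :
  (forall j, u <= j < u + W -> P j = false) -> count_in P u W = 0.
Proof.
  intros H. unfold count_in. rewrite (filter_ext_in P (fun _ => false)), filter_false; [easy|].
  intros j Hj. apply in_seq in Hj. now apply H.
Qed.

Lemma count_in_pos P u W j : u <= j < u + W -> P j = true -> 1 <= count_in P u W.
Proof.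
  intros Hj HP. unfold count_in.
  assert (Hin : In j (filter P (seq u W)))
    by (apply filter_In; split; [apply in_seq; lia|exact HP]).
  destruct (filter P (seq u W)); [contradiction|simpl; lia].
Qed.

Lemma exists_avoided_residue (P : nat -> bool) p L :
  count_in P 0 L < Nat.min p L ->
  exists r, r < Nat.min p L /\ forall i, r + i * p < L -> P (r + i * p) = false.
Proof.
  intros Hcount. apply NNPP. intros Hnone.
  assert (Hincl : incl (seq 0 (Nat.min p L)) (map (fun j => j mod p) (filter P (seq 0 L)))).
  { intros r Hr. apply in_seq in Hr.
    destruct (classic (exists i, r + i * p < L /\ P (r + i * p) = true)) as [[i [Hi HP]]|Hno].
    - apply in_map_iff. exists (r + i * p). split.
      + rewrite Nat.Div0.mod_add. apply Nat.mod_small. lia.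
      + apply filter_In. split; [apply in_seq; lia|exact HP].
    - exfalso. apply Hnone. exists r. split; [lia|]. intros i Hi.
      destruct (P (r + i * p)) eqn:E; [|reflexivity]. exfalso. eauto. }
  pose proof (NoDup_incl_length (seq_NoDup _ 0) Hincl) as Hlen.
  rewrite length_seq, length_map in Hlen. unfold count_in in Hcount. lia.
Qed.

Section Separated.
Variables (P : nat -> bool) (Q : nat).
Hypothesis HQ : 0 < Q.
Hypothesis Hsep : forall j j', P j = true -> P j' = true -> j < j' -> j + Q <= j'.

Lemma count_in_separated W u c : W <= c * Q -> count_in P u W <= c.
Proof.
  revert u c. induction W as [W IH] using lt_wf_ind. intros u c HW.
  destruct W as [|W]; [unfold count_in; simpl; lia|].
  change (S W) with (1 + W). rewrite count_in_add, count_in_1.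
  destruct (P u) eqn:Pu; simpl Nat.b2n.
  - destruct c as [|c]; [lia|].
    assert (Hfree : forall j, u + 1 <= j < u + Q -> P j = false).
    { intros j Hj. destruct (P j) eqn:Pj; [|reflexivity]. specialize (Hsep u j Pu Pj). lia. }
    destruct (le_lt_dec W (Q - 1)) as [Hshort|Hlong].
    + rewrite count_in_zero; [lia|]. intros j Hj. apply Hfree. lia.
    + replace W with ((Q - 1) + (W - (Q - 1))) by lia.
      rewrite count_in_add, count_in_zero by (intros j Hj; apply Hfree; lia).
      enough (count_in P (u + 1 + (Q - 1)) (W - (Q - 1)) <= c) by lia.
      apply IH; lia.
  - apply IH; lia.
Qed.

(* If every window [s q, s q + L), s < t, held [q] points, a point below [(t-1) q]
   would put [q + 1] points into a window of length at most [q Q]. *)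
Lemma not_all_windows_full q t L :
  0 < q -> 0 < t -> t * q <= Q -> L <= (q - 1) * Q + (t - 1) * q ->
  exists s, s < t /\ count_in P (s * q) L < q.
Proof.
  intros Hq Ht HtQ HL. apply NNPP. intros Hnone.
  assert (Hfull : forall s, s < t -> q <= count_in P (s * q) L).
  { intros s Hs. apply Nat.nlt_ge. intros Hlt. apply Hnone. eauto. }
  destruct (classic (exists g, g < (t - 1) * q /\ P g = true)) as [[g [Hg Pg]]|Hlow].
  - set (i := g / q).
    assert (Hi : i * q <= g < (i + 1) * q).
    { pose proof (Nat.div_mod_eq g q). pose proof (Nat.mod_upper_bound g q). unfold i. nia. }
    assert (Hit : i + 1 < t) by nia.
    assert (Hcount : count_in P g ((i + 1) * q - g + L) <= q) by (apply count_in_separated; nia).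
    rewrite count_in_add in Hcount.
    replace (g + ((i + 1) * q - g)) with ((i + 1) * q) in Hcount by lia.
    pose proof (Hfull (i + 1) Hit). pose proof (count_in_pos P g ((i + 1) * q - g) g ltac:(lia) Pg).
    lia.
  - pose proof (Hfull 0 Ht) as H0. simpl in H0.
    assert (Hbound : count_in P 0 ((t - 1) * q + (L - (t - 1) * q)) <= q - 1).
    { rewrite count_in_add, count_in_zero.
      - apply count_in_separated. nia.
      - intros j Hj. destruct (P j) eqn:Pj; [|reflexivity].
        exfalso. apply Hlow. exists j. split; [lia|exact Pj]. }
    replace ((t - 1) * q + (L - (t - 1) * q)) with (L + ((t - 1) * q - L)) in Hbound by lia.
    rewrite count_in_add in Hbound. lia.
Qed.

End Separated.

Lemma count_in_le_sum (Mp Mq : nat -> bool) q t L :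
  (forall j, Mp j = true -> exists s, s < t /\ Mq (j + s * q) = true) ->
  count_in Mp 0 L <= list_sum (map (fun s => count_in Mq (s * q) L) (seq 0 t)).
Proof.
  intros Hwit. induction L as [|L IH]; [unfold count_in; simpl; lia|].
  rewrite count_in_S, (map_ext _ _ (fun s => count_in_S Mq (s * q) L)), list_sum_map_add.
  destruct (Mp (0 + L)) eqn:HL; simpl Nat.b2n; [|lia].
  destruct (Hwit L HL) as [s [Hs Hq]].
  pose proof (in_le_list_sum (fun s => Nat.b2n (Mq (s * q + L))) (seq 0 t) s) as Hle.
  cbv beta in Hle. replace (s * q + L) with (L + s * q) in Hle by lia.
  rewrite Hq in Hle. change (Nat.b2n true) with 1 in Hle.
  specialize (Hle ltac:(apply in_seq; lia)). lia.
Qed.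

Lemma count_in_lt_of_witness (Mp Mq : nat -> bool) q t Q L :
  0 < q -> 0 < t -> t * q <= Q ->
  (forall j j', Mq j = true -> Mq j' = true -> j < j' -> j + Q <= j') ->
  (forall j, Mp j = true -> exists s, s < t /\ Mq (j + s * q) = true) ->
  L <= (q - 1) * Q + (t - 1) * q ->
  count_in Mp 0 L < t * q.
Proof.
  intros Hq Ht HtQ Hsep Hwit HL.
  destruct (not_all_windows_full Mq Q ltac:(nia) Hsep q t L Hq Ht HtQ HL) as [s0 [Hs0 Hlt]].
  eapply Nat.le_lt_trans; [exact (count_in_le_sum Mp Mq q t L Hwit)|].
  rewrite <- (length_seq t 0) at 2.
  apply (list_sum_map_lt _ q _ s0); [|apply in_seq; lia|exact Hlt].
  intros s _. apply (count_in_separated Mq Q); [nia|exact Hsep|nia].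
Qed.

Open Scope R_scope.

(** * Codings of rotations *)

Lemma Int_part_eq (v : R) (z : Z) : IZR z <= v < IZR z + 1 -> Int_part v = z.
Proof.
  intros Hv. symmetry. apply (Int_part_frac_part_spec v z (v - IZR z)); lra.
Qed.

Lemma frac_part_bounds (r : R) : 0 <= frac_part r < 1.
Proof. pose proof (base_fp r). lra. Qed.

Lemma Int_part_IZR_add (z : Z) (v : R) : Int_part (IZR z + v) = (z + Int_part v)%Z.
Proof.
  symmetry. apply (Int_part_frac_part_spec _ _ (frac_part v)).
  - apply frac_part_bounds.
  - rewrite plus_IZR, (Rplus_Int_part_frac_part v) at 1. ring.
Qed.

Lemma frac_part_IZR_add (z : Z) (u : R) : 0 <= u < 1 -> frac_part (IZR z + u) = u.
Proof. intros Hu. symmetry. now apply (Int_part_frac_part_spec _ z u). Qed.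

Section Rotation.
Variables alpha beta : R.
Hypothesis Halpha : 0 < alpha < 1/2.

Definition orbit (j : nat) : R := beta + INR j * alpha.

Definition rot_word (j : nat) : bool := sletter false alpha (orbit j).

Lemma rot_word_at j z u : orbit j = IZR z + u -> 0 <= u < 1 ->
  rot_word j = if Rlt_dec u (1 - alpha) then false else true.
Proof. intros E Hu. unfold rot_word, sletter. now rewrite E, frac_part_IZR_add. Qed.

Lemma Int_part_orbit_add j d : Int_part (orbit (j + d)) =
  (Int_part (orbit j) + Int_part (frac_part (orbit j) + INR d * alpha))%Z.
Proof.
  rewrite <- Int_part_IZR_add. f_equal.
  unfold frac_part, orbit. rewrite plus_INR. ring.
Qed.

Lemma frac_part_orbit_sub j d : frac_part (orbit (j + d)) - frac_part (orbit j) =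
  INR d * alpha - IZR (Int_part (orbit (j + d)) - Int_part (orbit j)).
Proof. unfold frac_part, orbit. rewrite minus_IZR, plus_INR. ring. Qed.

Lemma ones_rot_word j L :
  Z.of_nat (ones rot_word j L) = (Int_part (orbit (j + L)) - Int_part (orbit j))%Z.
Proof.
  induction L as [|L IH]; [rewrite Nat.add_0_r, Z.sub_diag; reflexivity|].
  rewrite <- Nat.add_1_r, ones_add, ones_1, Nat.add_assoc, Int_part_orbit_add, Nat2Z.inj_add, IH.
  pose proof (frac_part_bounds (orbit (j + L))). simpl (INR 1). rewrite Rmult_1_l.
  unfold rot_word, sletter. destruct (Rlt_dec _ _).
  - rewrite (Int_part_eq (frac_part (orbit (j + L)) + alpha) 0) by (simpl; lra). simpl. lia.
  - rewrite (Int_part_eq (frac_part (orbit (j + L)) + alpha) 1) by (simpl; lra). simpl. lia.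
Qed.

Definition crosses (lam : R) (j : nat) : bool :=
  negb (Z.eqb (Int_part (frac_part (orbit j) + lam)) 0).

Lemma crosses_true lam j : Rabs lam < 1 -> crosses lam j = true ->
  (0 < lam /\ 1 - lam <= frac_part (orbit j)) \/ (lam < 0 /\ frac_part (orbit j) < - lam).
Proof.
  intros Hlam H. unfold crosses in H. pose proof (frac_part_bounds (orbit j)).
  apply Rabs_def2 in Hlam.
  destruct (Z.eqb_spec (Int_part (frac_part (orbit j) + lam)) 0) as [_|Hne]; [discriminate|].
  destruct (Rlt_dec (frac_part (orbit j) + lam) 0); [right; lra|].
  destruct (Rlt_dec (frac_part (orbit j) + lam) 1); [|left; lra].
  exfalso. apply Hne, Int_part_eq. simpl. lra.
Qed.

Lemma crosses_close lam j j' : Rabs lam < 1 -> crosses lam j = true -> crosses lam j' = true ->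
  Rabs (frac_part (orbit j') - frac_part (orbit j)) < Rabs lam.
Proof.
  intros Hlam H H'.
  pose proof (frac_part_bounds (orbit j)). pose proof (frac_part_bounds (orbit j')).
  destruct (crosses_true lam j Hlam H) as [[A B]|[A B]];
  destruct (crosses_true lam j' Hlam H') as [[C D]|[C D]]; try lra.
  - rewrite (Rabs_right lam) by lra. apply Rabs_def1; lra.
  - rewrite (Rabs_left lam) by lra. apply Rabs_def1; lra.
Qed.

Lemma crosses_separated_2 lam j j' : Rabs lam < alpha ->
  crosses lam j = true -> crosses lam j' = true -> (j < j')%nat -> (j + 2 <= j')%nat.
Proof.
  intros Hlam H H' Hjj. destruct (Nat.eq_dec j' (j + 1)) as [->|]; [|lia]. exfalso.
  pose proof (crosses_close lam j (j + 1) ltac:(lra) H H') as Hclose.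
  rewrite frac_part_orbit_sub, Int_part_orbit_add in Hclose.
  replace (Int_part (orbit j) + _ - Int_part (orbit j))%Z
    with (Int_part (frac_part (orbit j) + INR 1 * alpha)) in Hclose by lia.
  pose proof (frac_part_bounds (orbit j)). simpl (INR 1) in Hclose. rewrite Rmult_1_l in Hclose.
  destruct (Rlt_dec (frac_part (orbit j) + alpha) 1).
  - rewrite (Int_part_eq _ 0) in Hclose by (simpl; lra).
    rewrite Rabs_right in Hclose by (simpl; lra). simpl in Hclose. lra.
  - rewrite (Int_part_eq _ 1) in Hclose by (simpl; lra).
    rewrite Rabs_left in Hclose by (simpl; lra). simpl in Hclose. lra.
Qed.

Section Approximation.
Variables (q num t Q : nat) (theta : R).
Hypothesis Hq : (0 < q)%nat.
Hypothesis Ht : (0 < t)%nat.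
Hypothesis HtQ : (t * q <= Q)%nat.
Hypothesis Htheta : INR q * alpha = INR num + theta.
Hypothesis Htheta_small : INR t * Rabs theta < alpha.
Hypothesis Hbest : forall (d : nat) (P : Z), (0 < d < Q)%nat ->
  Rabs theta <= Rabs (INR d * alpha - IZR P).

Lemma Rabs_mul_theta_lt : Rabs (INR t * theta) < alpha.
Proof. rewrite Rabs_mult, Rabs_right by (apply Rle_ge, pos_INR). exact Htheta_small. Qed.

Lemma Int_part_orbit_add_mul s j :
  (Int_part (orbit (j + s * q)) - Int_part (orbit j) =
   Z.of_nat (s * num) + Int_part (frac_part (orbit j) + INR s * theta))%Z.
Proof.
  rewrite Int_part_orbit_add, mult_INR, Rmult_assoc, Htheta.
  replace (frac_part (orbit j) + INR s * (INR num + theta))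
    with (IZR (Z.of_nat (s * num)) + (frac_part (orbit j) + INR s * theta))
    by (rewrite <- INR_IZR_INZ, mult_INR; ring).
  rewrite Int_part_IZR_add. lia.
Qed.

Lemma crossing_witness j : crosses (INR t * theta) j = true ->
  exists s, (s < t)%nat /\ crosses theta (j + s * q) = true.
Proof.
  intros Hj. apply NNPP. intros Hnone.
  assert (Hsteps : forall s, (s <= t)%nat ->
    (Int_part (orbit (j + s * q)) - Int_part (orbit j) = Z.of_nat (s * num))%Z).
  { induction s as [|s IH]; intros Hs; [rewrite Nat.add_0_r; lia|].
    assert (Hno : crosses theta (j + s * q) = false).
    { destruct (crosses theta (j + s * q)) eqn:E; [|reflexivity].
      exfalso. apply Hnone. exists s. split; [lia|exact E]. }
    unfold crosses in Hno. apply negb_false_iff, Z.eqb_eq in Hno.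
    pose proof (Int_part_orbit_add_mul 1 (j + s * q)) as Hstep.
    rewrite Rmult_1_l, Hno, <- Nat.add_assoc in Hstep.
    specialize (IH ltac:(lia)).
    replace (s * q + 1 * q)%nat with (S s * q)%nat in Hstep by lia. lia. }
  pose proof (Int_part_orbit_add_mul t j). rewrite Hsteps in H by lia.
  unfold crosses in Hj. apply negb_true_iff, Z.eqb_neq in Hj. lia.
Qed.

Lemma crossing_separated j j' : crosses theta j = true -> crosses theta j' = true ->
  (j < j')%nat -> (j + Q <= j')%nat.
Proof.
  intros H H' Hjj.
  assert (Hsmall : Rabs theta < 1).
  { assert (1 <= INR t) by (apply (le_INR 1); lia). pose proof (Rabs_pos theta). nra. }
  pose proof (crosses_close theta j j' Hsmall H H') as Hclose.
  destruct (le_lt_dec Q (j' - j)) as [|Hd]; [lia|]. exfalso.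
  replace j' with (j + (j' - j))%nat in Hclose by lia.
  rewrite frac_part_orbit_sub in Hclose.
  pose proof (Hbest (j' - j) (Int_part (orbit (j + (j' - j))) - Int_part (orbit j)) ltac:(lia)).
  lra.
Qed.

Let p := (t * q)%nat.
Let c := (t * num)%nat.

Lemma ones_rot_word_period j :
  Z.of_nat (ones rot_word j p) = (Z.of_nat c + Int_part (frac_part (orbit j) + INR t * theta))%Z.
Proof. rewrite ones_rot_word. apply Int_part_orbit_add_mul. Qed.

Lemma balanced_window_rot_word j : balanced_window rot_word p c j.
Proof.
  pose proof (ones_rot_word_period j) as Hones.
  pose proof (frac_part_bounds (orbit j)) as Hy.
  pose proof Rabs_mul_theta_lt as Hlam. apply Rabs_def2 in Hlam.
  assert (Hlast : orbit (j + p - 1) =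
    IZR (Int_part (orbit j) + Z.of_nat c) + (frac_part (orbit j) + INR t * theta - alpha)).
  { rewrite plus_IZR, <- INR_IZR_INZ. unfold frac_part, orbit, c, p.
    rewrite minus_INR by nia. rewrite plus_INR, !mult_INR. simpl (INR 1).
    replace ((INR j + INR t * INR q - 1) * alpha)
      with (INR j * alpha + INR t * (INR q * alpha) - alpha) by ring.
    rewrite Htheta. ring. }
  assert (Hfirst : orbit j = IZR (Int_part (orbit j)) + frac_part (orbit j))
    by apply Rplus_Int_part_frac_part.
  destruct (Rlt_dec (frac_part (orbit j) + INR t * theta) 0) as [Hneg|Hnneg].
  - rewrite (Int_part_eq _ (-1)) in Hones by (simpl; lra).
    right; right. split; [lia|split].
    + rewrite (rot_word_at _ _ _ Hfirst Hy). destruct (Rlt_dec _ _); [reflexivity|lra].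
    + rewrite (rot_word_at _ (Int_part (orbit j) + Z.of_nat c - 1)
                 (frac_part (orbit j) + INR t * theta - alpha + 1)).
      * destruct (Rlt_dec _ _); [reflexivity|lra].
      * rewrite Hlast, !minus_IZR, plus_IZR. simpl. ring.
      * lra.
  - destruct (Rlt_dec (frac_part (orbit j) + INR t * theta) 1) as [Hlt1|Hge1].
    + left. rewrite (Int_part_eq _ 0) in Hones by (simpl; lra). lia.
    + rewrite (Int_part_eq _ 1) in Hones by (simpl; lra).
      right; left. split; [lia|split].
      * rewrite (rot_word_at _ _ _ Hfirst Hy). destruct (Rlt_dec _ _); [lra|reflexivity].
      * rewrite (rot_word_at _ _ _ Hlast ltac:(lra)). destruct (Rlt_dec _ _); [lra|reflexivity].
Qed.

Lemma ones_of_not_crossing j : crosses (INR t * theta) j = false -> ones rot_word j p = c.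
Proof.
  intros H. unfold crosses in H. apply negb_false_iff, Z.eqb_eq in H.
  pose proof (ones_rot_word_period j) as Hones. rewrite H in Hones. lia.
Qed.

(* Windows of length [p] starting at [p + j] are unbalanced only when [crosses (t theta) (p + j)];
   these starting points are too sparse to meet every residue class modulo [p]. *)
Lemma abelian_period_rot_window n : (p < n)%nat -> (n < (q - 1) * Q + (t - 1) * q + p)%nat ->
  abelian_period (window rot_word p n) p.
Proof.
  intros Hpn Hn.
  set (L := (n - p + 1)%nat).
  set (Mp := fun j => crosses (INR t * theta) (p + j)).
  set (Mq := fun j => crosses theta (p + j)).
  assert (Hp : (0 < p)%nat) by (unfold p; nia).
  assert (HltL : (count_in Mp 0 L < L)%nat).
  { apply (Nat.le_lt_trans _ (L - 1)); [|lia].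
    apply (count_in_separated Mp 2); [lia| |lia].
    intros j j' H H' Hjj.
    pose proof (crosses_separated_2 _ (p + j) (p + j') Rabs_mul_theta_lt H H' ltac:(lia)). lia. }
  assert (Hltp : (count_in Mp 0 L < p)%nat).
  { apply (count_in_lt_of_witness Mp Mq q t Q); [exact Hq|exact Ht|exact HtQ| | |lia].
    - intros j j' H H' Hjj. pose proof (crossing_separated _ _ H H'). lia.
    - intros j Hj. destruct (crossing_witness _ Hj) as [s [Hs Hcross]].
      exists s. split; [exact Hs|]. unfold Mq. now rewrite <- Nat.add_assoc in Hcross. }
  destruct (exists_avoided_residue Mp p L ltac:(lia)) as [r [Hr Hfree]].
  apply (abelian_period_window rot_word p c n r); [lia|lia|lia| |apply balanced_window_rot_word..].
  intros i Hi. apply ones_of_not_crossing. rewrite <- Nat.add_assoc. apply Hfree. lia.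
Qed.

End Approximation.
End Rotation.

(** * Continued fractions *)

Lemma mul_cf_q_le alpha k t :
  (t <= cf_digit alpha (S k))%nat -> (t * cf_q alpha k <= cf_q alpha (S k))%nat.
Proof.
  intros Ht. unfold cf_q. cbn [qpair]. destruct (qpair alpha k) as [qp qc]. cbn [snd]. nia.
Qed.

Lemma Z_coeffs_opposite (u v q Q d : Z) :
  (1 <= q)%Z -> (0 < d < Q)%Z -> d = (u * q + v * Q)%Z -> u <> 0%Z /\ (u * v <= 0)%Z.
Proof.
  intros Hq Hd ->.
  destruct (Z.lt_trichotomy u 0) as [Hu|[Hu|Hu]]; destruct (Z.lt_trichotomy v 0) as [Hv|[Hv|Hv]];
    subst; split; nia.
Qed.

Section ContinuedFraction.
Variable alpha : R.
Hypothesis Halpha : 0 < alpha < 1.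
Hypothesis Hirr : irrational alpha.

Definition gauss_iter (j : nat) : R := Nat.iter j gauss alpha.

(* [ppair n = (p_{n-1}, p_n)], the numerators, with [p_{-1} = 1] and [p_0 = 0]. *)
Fixpoint ppair (n : nat) : nat * nat :=
  match n with
  | O => (1%nat, 0%nat)
  | S j => let (p, c) := ppair j in (c, (cf_digit alpha (S j) * c + p)%nat)
  end.

Definition cf_q_prev (j : nat) : nat := fst (qpair alpha j).
Definition cf_p_prev (j : nat) : nat := fst (ppair j).
Definition cf_p (j : nat) : nat := snd (ppair j).

Lemma cf_q_prev_S j : cf_q_prev (S j) = cf_q alpha j.
Proof. unfold cf_q_prev, cf_q. simpl. now destruct (qpair alpha j). Qed.

Lemma cf_q_S j : cf_q alpha (S j) = (cf_digit alpha (S j) * cf_q alpha j + cf_q_prev j)%nat.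
Proof. unfold cf_q_prev, cf_q. simpl. now destruct (qpair alpha j). Qed.

Lemma cf_p_prev_S j : cf_p_prev (S j) = cf_p j.
Proof. unfold cf_p_prev, cf_p. simpl. now destruct (ppair j). Qed.

Lemma cf_p_S j : cf_p (S j) = (cf_digit alpha (S j) * cf_p j + cf_p_prev j)%nat.
Proof. unfold cf_p_prev, cf_p. simpl. now destruct (ppair j). Qed.

Definition cf_err (j : nat) : R := INR (cf_q alpha j) * alpha - INR (cf_p j).
Definition cf_err_prev (j : nat) : R := INR (cf_q_prev j) * alpha - INR (cf_p_prev j).

Lemma cf_digit_spec j : 0 < gauss_iter j < 1 ->
  1 <= INR (cf_digit alpha (S j)) /\
  gauss_iter (S j) = / gauss_iter j - INR (cf_digit alpha (S j)).
Proof.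
  intros Hx. unfold cf_digit. fold (gauss_iter j).
  assert (Hinv : 1 < / gauss_iter j) by (rewrite <- Rinv_1; apply Rinv_lt_contravar; lra).
  destruct (base_Int_part (/ gauss_iter j)) as [Hlo Hhi].
  assert (Hpos : (1 <= Int_part (/ gauss_iter j))%Z).
  { assert (Hgt : 0 < IZR (Int_part (/ gauss_iter j))) by lra. apply lt_IZR in Hgt. lia. }
  rewrite INR_IZR_INZ, Z2Nat.id by lia. split; [now apply IZR_le|reflexivity].
Qed.

Lemma cf_err_S_rec j :
  cf_err (S j) = INR (cf_digit alpha (S j)) * cf_err j + cf_err_prev j.
Proof. unfold cf_err, cf_err_prev. rewrite cf_q_S, cf_p_S, !plus_INR, !mult_INR. ring. Qed.

Lemma cf_invariant j :
  0 < gauss_iter j < 1 /\ cf_err j = - gauss_iter j * cf_err_prev j /\ (1 <= cf_q alpha j)%nat.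
Proof.
  induction j as [|j [Hx [Herr Hq]]].
  - unfold gauss_iter, cf_err, cf_err_prev, cf_q, cf_q_prev, cf_p, cf_p_prev. simpl.
    split; [lra|split; [lra|lia]].
  - destruct (cf_digit_spec j Hx) as [Hdig Hnext].
    assert (Hq' : (1 <= cf_q alpha (S j))%nat).
    { rewrite cf_q_S.
      assert (1 <= cf_digit alpha (S j))%nat by (apply INR_le; change (INR 1) with 1; lra). nia. }
    assert (Herr' : cf_err (S j) = - gauss_iter (S j) * cf_err_prev (S j)).
    { unfold cf_err_prev. rewrite cf_q_prev_S, cf_p_prev_S. fold (cf_err j).
      rewrite cf_err_S_rec, Hnext, Herr. field. lra. }
    split; [|split; assumption].
    assert (Hbnd : 0 <= gauss_iter (S j) < 1) by apply frac_part_bounds.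
    split; [|lra]. destruct (Rle_lt_or_eq_dec _ _ (proj1 Hbnd)) as [|Hzero]; [assumption|exfalso].
    (* a vanishing Gauss iterate would make [alpha = p_{j+1} / q_{j+1}] *)
    apply (Hirr (Z.of_nat (cf_p (S j))) (cf_q alpha (S j))); [lia|].
    rewrite <- INR_IZR_INZ.
    assert (0 < INR (cf_q alpha (S j))) by (apply lt_0_INR; lia).
    rewrite <- Hzero, Ropp_0, Rmult_0_l in Herr'. unfold cf_err in Herr'.
    field_simplify_eq; lra.
Qed.

Lemma gauss_iter_bounds j : 0 < gauss_iter j < 1.
Proof. apply cf_invariant. Qed.

Lemma cf_q_pos j : (0 < cf_q alpha j)%nat.
Proof. apply cf_invariant. Qed.

Lemma cf_err_S j : cf_err (S j) = - gauss_iter (S j) * cf_err j.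
Proof.
  destruct (cf_invariant (S j)) as [_ [E _]].
  unfold cf_err_prev in E. now rewrite cf_q_prev_S, cf_p_prev_S in E.
Qed.

Lemma cf_err_neq0 j : cf_err j <> 0.
Proof.
  induction j as [|j IH].
  - unfold cf_err, cf_q, cf_p. simpl. lra.
  - rewrite cf_err_S. pose proof (gauss_iter_bounds (S j)).
    intros E. apply Rmult_integral in E as [E|E]; lra.
Qed.

Lemma Rabs_cf_err_le j : Rabs (cf_err j) <= alpha.
Proof.
  induction j as [|j IH].
  - unfold cf_err, cf_q, cf_p. simpl. rewrite Rabs_right; lra.
  - rewrite cf_err_S, Rabs_mult, Rabs_Ropp, (Rabs_right (gauss_iter _)).
    + pose proof (gauss_iter_bounds (S j)). pose proof (Rabs_pos (cf_err j)). nra.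
    + pose proof (gauss_iter_bounds (S j)). lra.
Qed.

(* [|theta_(k-1)| = (a_(k+1) + G^(k+1) alpha) |theta_k|] and [|theta_(k-1)| <= alpha]. *)
Lemma mul_Rabs_cf_err_lt k t : (1 <= k)%nat -> (t <= cf_digit alpha (S k))%nat ->
  INR t * Rabs (cf_err k) < alpha.
Proof.
  intros Hk Ht. destruct k as [|k]; [lia|].
  assert (Hprev : cf_err k =
    - (INR (cf_digit alpha (S (S k))) + gauss_iter (S (S k))) * cf_err (S k)).
  { pose proof (cf_err_S_rec (S k)) as E. rewrite cf_err_S in E.
    unfold cf_err_prev in E. rewrite cf_q_prev_S, cf_p_prev_S in E. fold (cf_err k) in E. lra. }
  pose proof (Rabs_cf_err_le k) as Hle. rewrite Hprev, Rabs_mult, Rabs_Ropp, Rabs_right in Hle.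
  - apply le_INR in Ht. pose proof (gauss_iter_bounds (S (S k))).
    pose proof (Rabs_pos_lt _ (cf_err_neq0 (S k))). nra.
  - pose proof (gauss_iter_bounds (S (S k))). pose proof (pos_INR (cf_digit alpha (S (S k)))). lra.
Qed.

Lemma alpha_lt_half : (2 <= cf_digit alpha 1)%nat -> alpha < 1/2.
Proof.
  intros H2. unfold cf_digit in H2. simpl in H2.
  destruct (base_Int_part (/ alpha)) as [Hlo _].
  assert (Hinv : 2 <= / alpha).
  { apply (Rle_trans _ (IZR (Int_part (/ alpha)))); [|exact Hlo].
    apply IZR_le. lia. }
  destruct (Req_dec alpha (1/2)) as [Ehalf|Ehalf].
  - exfalso. apply (Hirr 1%Z 2%nat); [lia|]. simpl. lra.
  - assert (alpha * 2 <= alpha * / alpha) by (apply Rmult_le_compat_l; lra).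
    rewrite Rinv_r in H by lra. lra.
Qed.

Lemma cf_det j : ((Z.of_nat (cf_q alpha j) * Z.of_nat (cf_p_prev j)
  - Z.of_nat (cf_q_prev j) * Z.of_nat (cf_p j)) ^ 2 = 1)%Z.
Proof.
  induction j as [|j IH]; [reflexivity|].
  rewrite cf_q_S, cf_p_S, cf_q_prev_S, cf_p_prev_S, !Nat2Z.inj_add, !Nat2Z.inj_mul.
  rewrite <- IH. ring.
Qed.

(* Best approximation: writing [d] and [P] on the basis [(q_k, p_k), (q_(k+1), p_(k+1))]
   (unimodular by [cf_det]) gives [d alpha - P = theta_k (u - v G^(k+1) alpha)], with [u <> 0]
   and [u], [v] of no common sign. *)
Lemma cf_err_best k (d : nat) (P : Z) : (0 < d < cf_q alpha (S k))%nat ->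
  Rabs (cf_err k) <= Rabs (INR d * alpha - IZR P).
Proof.
  intros Hd.
  set (q := Z.of_nat (cf_q alpha k)). set (Q := Z.of_nat (cf_q alpha (S k))).
  set (p0 := Z.of_nat (cf_p k)). set (p1 := Z.of_nat (cf_p (S k))).
  set (s := (Q * p0 - q * p1)%Z).
  assert (Hs : (s * s = 1)%Z).
  { pose proof (cf_det (S k)) as E. rewrite cf_q_prev_S, cf_p_prev_S in E. unfold s. lia. }
  set (u := (s * (P * Q - Z.of_nat d * p1))%Z).
  set (v := (s * (Z.of_nat d * p0 - P * q))%Z).
  assert (Hdu : Z.of_nat d = (u * q + v * Q)%Z).
  { rewrite <- (Z.mul_1_r (Z.of_nat d)) at 1. rewrite <- Hs. unfold u, v, s. ring. }
  assert (HPu : P = (u * p0 + v * p1)%Z).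
  { rewrite <- (Z.mul_1_r P) at 1. rewrite <- Hs. unfold u, v, s. ring. }
  assert (Hexpand : INR d * alpha - IZR P = cf_err k * (IZR u - IZR v * gauss_iter (S k))).
  { transitivity (IZR u * cf_err k + IZR v * cf_err (S k)).
    - unfold cf_err. rewrite !INR_IZR_INZ, Hdu, HPu. fold q Q p0 p1.
      rewrite !plus_IZR, !mult_IZR. ring.
    - rewrite cf_err_S. ring. }
  pose proof (cf_q_pos k) as Hq.
  destruct (Z_coeffs_opposite u v q Q (Z.of_nat d) ltac:(unfold q; lia) ltac:(unfold Q; lia) Hdu)
    as [Hu Huv].
  assert (Hfactor : 1 <= Rabs (IZR u - IZR v * gauss_iter (S k))).
  { pose proof (gauss_iter_bounds (S k)) as Hx.
    destruct (Z_lt_le_dec 0 u) as [Hpos|Hneg].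
    - assert (v <= 0)%Z by nia. apply IZR_le in H. assert (1 <= IZR u) by (apply IZR_le; lia).
      rewrite Rabs_right; nra.
    - assert (0 <= v)%Z by nia. apply IZR_le in H. assert (IZR u <= -1) by (apply IZR_le; lia).
      rewrite Rabs_left1; nra. }
  rewrite Hexpand, Rabs_mult. pose proof (Rabs_pos (cf_err k)). nra.
Qed.

End ContinuedFraction.

Lemma cf_index_pos_of_not_in_M alpha m k :
  (cf_q alpha k <= m)%nat -> (forall j, (cf_q alpha j <= m)%nat -> (j <= k)%nat) ->
  ~ in_M alpha m -> (1 <= k)%nat.
Proof.
  intros Hqk Hkmax HnM. destruct k as [|k]; [exfalso|lia].
  assert (Hq1 : cf_q alpha 1 = cf_digit alpha 1) by (unfold cf_q; simpl; lia).
  assert (Hm : (m < cf_digit alpha 1)%nat) by (specialize (Hkmax 1%nat); lia).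
  apply HnM. exists 0%nat, m. change (cf_q alpha 0) with 1%nat in *. repeat split; lia.
Qed.

(** * Factors of slope alpha *)

(* How far [z] may move to the left without changing its coding with intervals closed on the
   right; after such a move both conventions code it alike. *)
Definition left_margin (alpha z : R) : R :=
  if Req_EM_T (frac_part z) 0 then alpha
  else if Rle_dec (frac_part z) (1 - alpha) then frac_part z else frac_part z - (1 - alpha).

Lemma left_margin_pos alpha z : 0 < alpha < 1 -> 0 < left_margin alpha z.
Proof.
  intros Ha. pose proof (frac_part_bounds z). unfold left_margin.
  destruct (Req_EM_T _ _); [lra|]. destruct (Rle_dec _ _); lra.
Qed.

Lemma sletter_true_shift alpha z eps : 0 < alpha < 1 -> 0 < eps <= left_margin alpha z ->
  sletter true alpha z = sletter false alpha (z - eps).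
Proof.
  intros Ha [Heps Hle]. unfold left_margin in Hle. unfold sletter.
  pose proof (frac_part_bounds z) as Hz.
  assert (Hsplit : z - eps = IZR (Int_part z) + (frac_part z - eps)) by (unfold frac_part; ring).
  destruct (Req_EM_T (frac_part z) 0) as [H0|H0].
  - replace (z - eps) with (IZR (Int_part z - 1) + (1 - eps))
      by (rewrite minus_IZR, Hsplit, H0; ring).
    rewrite frac_part_IZR_add by lra.
    destruct (Rlt_dec 0 (frac_part z)); [lra|].
    destruct (Rlt_dec (1 - eps) (1 - alpha)); [lra|reflexivity].
  - destruct (Rlt_dec 0 (frac_part z)); [|lra].
    destruct (Rle_dec (frac_part z) (1 - alpha));
      rewrite Hsplit, frac_part_IZR_add by lra; destruct (Rlt_dec _ _); (reflexivity || lra).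
Qed.

Lemma sletter_true_uniform_shift alpha (z : nat -> R) M : 0 < alpha < 1 ->
  exists eps, forall i, (i < M)%nat -> sletter true alpha (z i) = sletter false alpha (z i - eps).
Proof.
  intros Ha.
  assert (Hmin : exists eps, 0 < eps /\ forall i, (i < M)%nat -> eps <= left_margin alpha (z i)).
  { induction M as [|M [eps [Heps Hle]]].
    - exists 1. split; [lra|]. intros i Hi. lia.
    - exists (Rmin eps (left_margin alpha (z M))). split.
      + apply Rmin_glb_lt; [exact Heps|now apply left_margin_pos].
      + intros i Hi. destruct (Nat.eq_dec i M) as [->|]; [apply Rmin_r|].
        eapply Rle_trans; [apply Rmin_l|apply Hle; lia]. }
  destruct Hmin as [eps [Heps Hle]]. exists eps. intros i Hi.
  apply sletter_true_shift; [exact Ha|split; auto].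
Qed.

Lemma factor_of_slope_window alpha w p : 0 < alpha < 1 -> factor_of_slope alpha w ->
  exists beta, w = window (rot_word alpha beta) p (length w).
Proof.
  intros Ha [rho [c [n [_ Hw]]]].
  set (z := fun i => rho + INR (n + i) * alpha).
  assert (Hshift : exists eps, forall i, (i < length w)%nat ->
    sletter c alpha (z i) = sletter false alpha (z i - eps)).
  { destruct c; [now apply sletter_true_uniform_shift|]. exists 0. intros i _. f_equal. ring. }
  destruct Hshift as [eps Heps].
  exists (rho + INR n * alpha - eps - INR p * alpha).
  apply nth_ext with (d := false) (d' := false); [now rewrite length_window|].
  intros i Hi. rewrite nth_window, Hw by exact Hi. unfold sturmian.
  change (rho + INR (n + i) * alpha) with (z i). rewrite Heps by exact Hi.
  unfold rot_word, orbit, z. f_equal. rewrite !plus_INR. ring.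
Qed.

Lemma abelian_period_of_short_factor alpha w k t :
  0 < alpha < 1 -> irrational alpha -> (2 <= cf_digit alpha 1)%nat -> factor_of_slope alpha w ->
  (1 <= k)%nat -> (1 <= t)%nat -> (t <= cf_digit alpha (S k))%nat ->
  (t * cf_q alpha k < length w)%nat ->
  (length w <
     (cf_q alpha k - 1) * cf_q alpha (S k) + (t - 1) * cf_q alpha k + t * cf_q alpha k)%nat ->
  abelian_period w (t * cf_q alpha k).
Proof.
  intros Ha Hirr Ha1 Hw Hk Ht Htk Hlo Hhi.
  destruct (factor_of_slope_window alpha w (t * cf_q alpha k) Ha Hw) as [beta Hbeta].
  rewrite Hbeta.
  apply (abelian_period_rot_window alpha beta (conj (proj1 Ha) (alpha_lt_half alpha Ha Hirr Ha1))
           (cf_q alpha k) (cf_p alpha k) t (cf_q alpha (S k)) (cf_err alpha k)).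
  - apply cf_q_pos; assumption.
  - lia.
  - now apply mul_cf_q_le.
  - unfold cf_err. ring.
  - now apply mul_Rabs_cf_err_lt.
  - intros d P Hd. now apply cf_err_best.
  - exact Hlo.
  - exact Hhi.
Qed.

Theorem proposition4p2 (alpha : R) (w : list bool) (m k t E : nat) :
  0 < alpha < 1 ->
  irrational alpha ->
  (2 <= cf_digit alpha 1)%nat ->
  factor_of_slope alpha w ->
  w <> nil ->
  min_abelian_period w m ->
  (cf_q alpha k <= m)%nat ->
  (forall j : nat, (cf_q alpha j <= m)%nat -> (j <= k)%nat) ->
  (1 <= t)%nat -> (t <= cf_digit alpha (S k))%nat -> (t * cf_q alpha k <= m)%nat ->
  (forall t' : nat, (1 <= t')%nat -> (t' <= cf_digit alpha (S k))%nat ->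
      (t' * cf_q alpha k <= m)%nat -> (t' <= t)%nat) ->
  ~ in_M alpha m ->
  is_ab alpha m E ->
  ((Z.of_nat (cf_q alpha (S k)) + 2 * Z.of_nat t - 1) * Z.of_nat (cf_q alpha k)
      - Z.of_nat (cf_q alpha (S k)) <= Z.of_nat (length w))%Z /\
  ((Z.of_nat (cf_q alpha (S k)) + 2 * Z.of_nat t - 1) * Z.of_nat (cf_q alpha k)
      - Z.of_nat (cf_q alpha (S k)) <= (Z.of_nat E + 2) * Z.of_nat m - 2)%Z.
Proof.
  intros Ha Hirr Ha1 Hw _ [Hm Hmin] Hqk Hkmax Ht Htk Htq _ HnM Hab.
  pose proof (length_le_of_ab alpha w m E Hw Hm Hab) as Hlen_ab.
  pose proof (cf_index_pos_of_not_in_M alpha m k Hqk Hkmax HnM) as Hk.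
  pose proof (cf_q_pos alpha Ha Hirr k) as Hq.
  assert (Htqm : (t * cf_q alpha k < m)%nat).
  { destruct (Nat.eq_dec (t * cf_q alpha k) m) as [Heq|]; [|lia].
    exfalso. apply HnM. now exists k, t. }
  assert (Hlong : ~ (length w < (cf_q alpha k - 1) * cf_q alpha (S k)
                                + (t - 1) * cf_q alpha k + t * cf_q alpha k)%nat).
  { intros Hshort. pose proof (abelian_period_le_length w m Hm).
    pose proof (Hmin _ (abelian_period_of_short_factor alpha w k t Ha Hirr Ha1 Hw Hk Ht Htk
                          ltac:(lia) Hshort)).
    lia. }
  split; nia.
Qed.
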